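(* Let $q\ge 2$ and $n\ge 1$ be integers and let $m=n+1$. Under uniform transmission over the $1$-insertion channel with input length $n$, $$\max_{{\boldsymbol y}\in\Sigma_q^{m}} \mathsf{H}^{\mathsf{In}}_{1\text{-}\mathsf{Ins}}({\boldsymbol y}) = \log_2 m,$$ and this maximum is attained only by channel outputs ${\boldsymbol y}$ with exactly $m$ runs.
   Context: $\Sigma_q=\{0,1,\dots,q-1\}$. For sequences ${\boldsymbol x}$ of length $\ell$ and ${\boldsymbol y}$ of length $N\ge \ell$, the embedding number $\omega_{{\boldsymbol x}}({\boldsymbol y})$ is the number of index tuples $1\le i_1<\dots<i_\ell\le N$ with $y_{i_j}=x_j$ for all $j$. The $k$-insertion channel with input length $n$ maps ${\boldsymbol x}\in\Sigma_q^n$ to ${\boldsymbol y}\in\Sigma_q^{n+k}$ with probability $\Pr\{{\boldsymbol y}\mid{\boldsymbol x}\}=\omega_{{\boldsymbol x}}({\boldsymbol y})/\big(\binom{n+k}{k}q^k\big)$ (exactly $k$ symbols are inserted, locations and values chosen uniformly). Under uniform transmission the input $X$ is uniform on $\Sigma_q^n$, and for an output ${\boldsymbol y}$ the input entropy is $\mathsf{H}^{\mathsf{In}}_{k\text{-}\mathsf{Ins}}({\boldsymbol y})=H(X\mid Y={\boldsymbol y})=-\sum_{{\boldsymbol x}}P({\boldsymbol x}\mid{\boldsymbol y})\log_2 P({\boldsymbol x}\mid{\boldsymbol y})$ with $P({\boldsymbol x}\mid {\boldsymbol y})=\Pr\{{\boldsymbol y}\mid{\boldsymbol x}\}/\sum_{{\boldsymbol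 x}'\in\Sigma_q^n}\Pr\{{\boldsymbol y}\mid{\boldsymbol x}'\}$. A run is a maximal block of identical consecutive symbols. *)

From mathcomp Require Import all_boot all_order all_algebra.
From mathcomp Require Import reals exp.
Set Implicit Arguments. Unset Strict Implicit. Unset Printing Implicit Defensive.
Import Order.TTheory GRing.Theory Num.Theory.
Local Open Scope ring_scope.

(* Sigma_q = 'I_q; sequences of length N are N.-tuple 'I_q. *)

(* An index tuple
   i_1 < ... < i_l is identified with the set S = {i_1,...,i_l} of 'I_N. *)
Definition embnum (q l N : nat) (x : l.-tuple 'I_q) (y : N.-tuple 'I_q) : nat :=
  #|[set S : {set 'I_N} | mask [seq (i \in S) | i <- enum 'I_N] (val y) == val x]|.

Definition ins_prob (R : realType) (q n k : nat)
    (y : (n + k).-tuple 'I_q) (x : n.-tuple 'I_q) : R :=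
  (embnum x y)%:R / ('C(n + k, k) * q ^ k)%:R.

Definition posterior (R : realType) (q n k : nat)
    (y : (n + k).-tuple 'I_q) (x : n.-tuple 'I_q) : R :=
  ins_prob R y x / \sum_(x' : n.-tuple 'I_q) ins_prob R y x'.

Definition log2 (R : realType) (x : R) : R := ln x / ln 2.

Definition input_entropy (R : realType) (q n k : nat)
    (y : (n + k).-tuple 'I_q) : R :=
  \sum_(x : n.-tuple 'I_q)
    (let p := posterior R y x in if p == 0 then 0 else - (p * log2 p)).

Definition runs (T : eqType) (s : seq T) : nat :=
  match s with
  | [::] => 0
  | a :: t => (count (fun p : T * T => p.1 != p.2) (zip (a :: t) t)).+1
  end.

From mathcomp Require Import all_boot all_order all_algebra.
From mathcomp Require Import reals exp.
From mathcomp Require Import zify ring.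

Set Implicit Arguments.
Unset Strict Implicit.
Unset Printing Implicit Defensive.

Import Order.TTheory GRing.Theory Num.Theory.

(* With one insertion, [embnum x y] is the number of positions of [y] whose
   deletion yields [x]; these counts sum to [n + 1], so the posterior is their
   empirical distribution and its entropy is log2 (n + 1) minus the
   nonnegative sum of (w / (n + 1)) log2 w, which vanishes iff every count is
   at most 1.  Deleting positions i < j of [y] gives the same word only if
   y_i = y_(i+1), and deleting two adjacent equal symbols always does, so the
   bound is attained exactly when adjacent symbols differ, i.e. when [y] has
   n + 1 runs; an alternating word over two symbols is such a [y]. *)

Definition delete_at {T : Type} (i : nat) (s : seq T) := take i s ++ drop i.+1 s.

Section DeleteAt.
Variable T : Type.
Implicit Types (s : seq T) (i j k : nat).

Lemma size_delete_at i s : i < size s -> size (delete_at i s) = (size s).-1.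
Proof. by move=> lt_i_s; rewrite size_cat size_take lt_i_s size_drop; lia. Qed.

Lemma mask_iota_neq a i s :
  mask [seq k != a + i | k <- iota a (size s)] s = delete_at i s.
Proof.
elim: s a i => [|x s IHs] a [|i] //=.
- rewrite addn0 eqxx [RHS]/delete_at /= drop0.
  have /all_pred1P -> : all (pred1 true) [seq k != a | k <- iota a.+1 (size s)].
    rewrite all_map; apply/allP => k; rewrite mem_iota => /andP[lt_a_k _].
    by rewrite /= neq_ltn lt_a_k orbT.
  by rewrite size_map size_iota mask_true.
- by rewrite -addSnnS IHs neq_ltn ltn_addr.
Qed.

Lemma mask_setC1 N (i : 'I_N) s :
  size s = N -> mask [seq u \in [set~ i] | u <- enum 'I_N] s = delete_at i s.
Proof.
move=> size_s; rewrite -(mask_iota_neq 0) size_s -val_enum_ord -map_comp.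
by congr mask; apply: eq_map => u; rewrite /= in_setC1.
Qed.

Lemma delete_at_nth_eq (x0 : T) k s : k.+1 < size s ->
  nth x0 s k = nth x0 s k.+1 -> delete_at k s = delete_at k.+1 s.
Proof.
move=> lt_k_s eq_k; rewrite /delete_at (take_nth x0) ?(ltnW lt_k_s) //.
by rewrite (drop_nth x0 lt_k_s) -eq_k -cats1 -catA.
Qed.

Lemma delete_at_eq_nth (x0 : T) i j s : i < j -> j < size s ->
  delete_at i s = delete_at j s -> nth x0 s i = nth x0 s i.+1.
Proof.
move=> lt_ij lt_j_s /(congr1 (nth x0 ^~ i)).
rewrite !nth_cat !size_take (ltn_trans lt_ij lt_j_s) lt_j_s ltnn lt_ij subnn.
by rewrite nth_drop addn0 nth_take.
Qed.

End DeleteAt.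

Section DeleteAtInjective.
Variable T : eqType.

Local Notation neq := [rel a b : T | a != b].

Lemma delete_at_injP (s : seq T) :
  reflect {in gtn (size s) &, injective (delete_at ^~ s)} (sorted neq s).
Proof.
case: s => [|x0 s]; first by left.
move: (x0 :: s) => {}s.
apply: (iffP (sortedP x0)) => [neq_s i j lt_i lt_j | inj_s k lt_k].
- have [lt_ij|lt_ji|//] := ltngtP i j => eq_ij.
  + have /eqP[] := neq_s i (leq_ltn_trans lt_ij lt_j).
    exact: delete_at_eq_nth eq_ij.
  + have /eqP[] := neq_s j (leq_ltn_trans lt_ji lt_i).
    exact: delete_at_eq_nth (esym eq_ij).
- apply/eqP => /(delete_at_nth_eq lt_k)/inj_s.
  by move=> /(_ (ltnW lt_k) lt_k)/eqP; rewrite eqn_leq ltnn andbF.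
Qed.

Lemma runs_eq_size (s : seq T) : (runs s == size s) = sorted neq s.
Proof.
case: s => [|a t] //=; rewrite eqSS.
elim: t a => [|b t IHt] a //=; rewrite -IHt.
case: (a != b); first by rewrite add1n eqSS.
by rewrite ltn_eqF // ltnS (leq_trans (count_size _ _)) // size_zip geq_minr.
Qed.

Lemma runs_alternating (a b : T) N : a != b ->
  runs (mkseq (fun k => if odd k then b else a) N) = N.
Proof.
move=> neq_ab; apply/eqP.
rewrite -[X in _ == X](size_mkseq (fun k => if odd k then b else a)) runs_eq_size.
apply/(sortedP a) => i; rewrite size_mkseq => lt_i.
by rewrite !nth_mkseq ?(ltnW lt_i) //=; case: (odd i); rewrite // eq_sym.
Qed.

End DeleteAtInjective.

Lemma count_mem_enum_ord N (S : {set 'I_N}) :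
  count id [seq i \in S | i <- enum 'I_N] = #|S|.
Proof. by rewrite count_map cardE /enum_mem -size_filter filter_predT. Qed.

Section OneInsertion.
Variables (q l N : nat) (y : N.-tuple 'I_q).
Hypothesis N_eq : N = l.+1.

Lemma embnum_delete_at (x : l.-tuple 'I_q) :
  embnum x y = #|[set i : 'I_N | delete_at i y == x]|.
Proof.
have inj_setC1 : injective (fun i : 'I_N => [set~ i]).
  by move=> i j /setP/(_ i); rewrite !in_setC1 eqxx => /esym/eqP.
rewrite /embnum -(card_imset _ inj_setC1); congr #|pred_of_set _|.
apply/setP => S; rewrite inE; apply/eqP/imsetP => [mask_S | [i]].
- have /eqP card_S : #|S| == l.
    rewrite -(size_tuple x) -mask_S size_mask ?count_mem_enum_ord //.
    by rewrite size_map size_enum_ord size_tuple.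
  have /cards1P[i S_eq] : #|~: S| == 1.
    by rewrite cardsCs setCK card_ord card_S N_eq subSnn.
  exists i; last by rewrite -S_eq setCK.
  by rewrite inE -mask_setC1 ?size_tuple // -S_eq setCK mask_S.
- by rewrite inE => /eqP del_i ->; rewrite mask_setC1 ?size_tuple.
Qed.

Lemma delete_at_tupleP (i : 'I_N) : size (delete_at i y) == l.
Proof. by rewrite size_delete_at size_tuple ?N_eq. Qed.

Lemma sum_embnum : (\sum_(x : l.-tuple 'I_q) embnum x y)%N = N.
Proof.
under eq_bigr => x _ do rewrite embnum_delete_at -sum1_card big_mkcond /=.
rewrite exchange_big /= -[RHS]card_ord -sum1_card; apply: eq_bigr => i _.
rewrite (bigD1 (Tuple (delete_at_tupleP i))) //= inE eqxx big1 // => x.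
rewrite inE => /eqP neq_x; case: eqP => // del_i.
by case: neq_x; apply: val_inj.
Qed.

Lemma embnum_le1P :
  (forall x : l.-tuple 'I_q, embnum x y <= 1) <->
  {in gtn (size y) &, injective (delete_at ^~ (val y))}.
Proof.
split=> [le1 i j | inj_y x]; first rewrite !inE size_tuple => lt_i lt_j eq_ij.
- have := le1 (Tuple (delete_at_tupleP (Ordinal lt_i))).
  rewrite embnum_delete_at => /card_le1_eqP/(_ (Ordinal lt_i) (Ordinal lt_j)).
  by rewrite !inE /= eq_ij eqxx => /(_ isT isT)/(congr1 val).
- rewrite embnum_delete_at; apply/card_le1_eqP => i j.
  rewrite !inE => /eqP del_i /eqP del_j.
  by apply/val_inj/inj_y; rewrite ?inE ?size_tuple ?ltn_ord // del_i del_j.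
Qed.

End OneInsertion.

Local Open Scope ring_scope.

Section Entropy.
Variable R : realType.

Definition entropy (I : finType) (p : I -> R) : R :=
  \sum_i (if p i == 0 then 0 else - (p i * log2 (p i))).

Definition empirical (I : finType) (w : I -> nat) : I -> R :=
  fun i => (w i)%:R / (\sum_j w j)%:R.

Lemma log2_nat_ge0 (k : nat) : 0 <= log2 (k%:R : R).
Proof.
rewrite /log2; have [->|k_gt0] := posnP k; first by rewrite ln0 ?mul0r.
by rewrite divr_ge0 ?ln_ge0 ?ler1n ?ltW ?ln_gt0 ?ltr1n.
Qed.

Lemma log2_nat_gt0 (k : nat) : (1 < k)%N -> 0 < log2 (k%:R : R).
Proof. by move=> k_gt1; rewrite divr_gt0 ?ln_gt0 ?ltr1n. Qed.

Section Empirical.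
Variables (I : finType) (w : I -> nat).

Lemma leq_count_sum i : (w i <= \sum_j w j)%N.
Proof. by rewrite (bigD1 i) //= leq_addr. Qed.

Lemma entropy_empiricalE :
  entropy (empirical w) =
  log2 (\sum_j w j)%:R - \sum_i empirical w i * log2 (w i)%:R.
Proof.
have sum_log2 : \sum_i empirical w i * log2 (\sum_j w j)%:R = log2 (\sum_j w j)%:R.
  rewrite -mulr_suml /empirical -mulr_suml -natr_sum.
  have [->|sum_gt0] := posnP (\sum_j w j)%N; first by rewrite /log2 ln0 ?mul0r.
  by rewrite mulfV ?mul1r // pnatr_eq0 -lt0n.
rewrite -{1}sum_log2 -sumrB; apply: eq_bigr => i _.
have [w0|w_gt0] := posnP (w i); first by rewrite /empirical w0 !mul0r eqxx subrr.
have sum_gt0 := leq_trans w_gt0 (leq_count_sum i).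
rewrite /empirical mulf_eq0 invr_eq0 !pnatr_eq0 (gtn_eqF w_gt0) (gtn_eqF sum_gt0) /=.
rewrite /log2 ln_div ?posrE ?ltr0n //; ring.
Qed.

Lemma empirical_log2_ge0 i : 0 <= empirical w i * log2 (w i)%:R.
Proof. by rewrite mulr_ge0 ?log2_nat_ge0 ?divr_ge0. Qed.

Lemma empirical_log2_eq0 i : (empirical w i * log2 (w i)%:R == 0) = (w i <= 1)%N.
Proof.
case: leqP => [w_le1|w_gt1].
  rewrite /empirical; case: (w i) w_le1 => [|[|//]] _; first by rewrite !mul0r eqxx.
  by rewrite /log2 ln1 mul0r mulr0 eqxx.
have sum_gt1 := leq_trans w_gt1 (leq_count_sum i).
by rewrite gt_eqF // mulr_gt0 ?log2_nat_gt0 ?divr_gt0 ?ltr0n ?(ltnW w_gt1)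
  ?(ltnW sum_gt1).
Qed.

Lemma entropy_empirical_le : entropy (empirical w) <= log2 (\sum_j w j)%:R.
Proof.
rewrite entropy_empiricalE gerBl.
by apply: sumr_ge0 => i _; exact: empirical_log2_ge0.
Qed.

Lemma entropy_empirical_eq_log2P :
  entropy (empirical w) = log2 (\sum_j w j)%:R <-> forall i, (w i <= 1)%N.
Proof.
rewrite entropy_empiricalE; split=> [entropy_eq i | w_le1].
- move: entropy_eq; rewrite -[X in _ = X]subr0 => /addrI/oppr_inj sum0.
  rewrite -empirical_log2_eq0 (psumr_eq0P _ sum0) // => j _.
  exact: empirical_log2_ge0.
- by rewrite [X in _ - X]big1 ?subr0 // => i _; apply/eqP; rewrite empirical_log2_eq0.
Qed.

End Empirical.
End Entropy.

Section InsertionChannel.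
Variables (R : realType) (q n k : nat).
Hypothesis q_gt0 : (0 < q)%N.

Lemma posterior_empirical (y : (n + k).-tuple 'I_q) (x : n.-tuple 'I_q) :
  posterior R y x = empirical R (fun x : n.-tuple _ => embnum x y) x.
Proof.
have C_neq0 : ('C(n + k, k) * q ^ k)%:R != 0 :> R.
  by rewrite pnatr_eq0 muln_eq0 negb_or -!lt0n bin_gt0 leq_addl expn_gt0 q_gt0.
by rewrite /posterior /ins_prob -mulr_suml -natr_sum invf_div mulrA divfK.
Qed.

Lemma input_entropyE (y : (n + k).-tuple 'I_q) :
  input_entropy R y = entropy (empirical R (fun x : n.-tuple _ => embnum x y)).
Proof. by apply: eq_bigr => x _; rewrite /= posterior_empirical. Qed.

End InsertionChannel.

Section SingleInsertion.
Variables (R : realType) (q n : nat).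
Hypothesis q_gt0 : (0 < q)%N.

Lemma input_entropy1_le (y : (n + 1).-tuple 'I_q) :
  input_entropy R y <= log2 (n + 1)%:R.
Proof.
have := entropy_empirical_le R (fun x : n.-tuple _ => embnum x y).
by rewrite (sum_embnum y (addn1 n)) -input_entropyE.
Qed.

Lemma input_entropy1_eq_log2P (y : (n + 1).-tuple 'I_q) :
  input_entropy R y = log2 (n + 1)%:R <-> runs y = (n + 1)%N.
Proof.
have := entropy_empirical_eq_log2P R (fun x : n.-tuple _ => embnum x y).
rewrite (sum_embnum y (addn1 n)) -input_entropyE // => ->.
rewrite (embnum_le1P y (addn1 n)); split=> [/delete_at_injP | runs_y].
- by rewrite -runs_eq_size size_tuple => /eqP.
- by apply/delete_at_injP; rewrite -runs_eq_size runs_y size_tuple.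
Qed.

End SingleInsertion.

Unset Implicit Arguments.

Theorem theorem7 (R : realType) (q n : nat) (hq : (2 <= q)%N) (hn : (1 <= n)%N) :
  (exists y : (n + 1).-tuple 'I_q, input_entropy R y = log2 ((n + 1)%:R : R)) /\
  (forall y : (n + 1).-tuple 'I_q, input_entropy R y <= log2 ((n + 1)%:R : R)) /\
  (forall y : (n + 1).-tuple 'I_q,
      input_entropy R y = log2 ((n + 1)%:R : R) -> runs (val y) = (n + 1)%N).
Proof.
have q_gt0 := ltnW hq.
split; [|split] => [|y|y]; last first.
- exact: (input_entropy1_eq_log2P _ q_gt0 y).1.
- exact: input_entropy1_le.
pose a : 'I_q := Ordinal q_gt0; pose b : 'I_q := Ordinal hq.
pose alternating := mkseq (fun k => if odd k then b else a) (n + 1).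
have size_alternating : size alternating == (n + 1)%N by rewrite size_mkseq.
exists (Tuple size_alternating); apply/(input_entropy1_eq_log2P _ q_gt0).
exact: runs_alternating.
Qed.
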